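(* The Rudin-Shapiro sequence $\mathbf{r}$ has an unbordered factor of every length $n \geq 0$.
   Context: For a word $w \in 1\{0,1\}^*$ and integer $n \geq 0$, let $a_w(n)$ be the number of (possibly overlapping) occurrences of $w$ as a factor of the ordinary (most significant digit first) base-$2$ representation of $n$. The Rudin-Shapiro sequence is $\mathbf{r} = r(0)r(1)r(2)\cdots$ with $r(n) = (-1)^{a_{11}(n)}$, a sequence over $\{1,-1\}$. A factor of length $n$ of $\mathbf{r}$ is a word $r(i)r(i+1)\cdots r(i+n-1)$ for some $i \geq 0$. A finite word $w$ is bordered if there is a word $x$ with $0 < |x| \leq |w|/2$ such that $w$ both begins and ends with $x$; otherwise $w$ is unbordered. *)

From mathcomp Require Import all_boot all_algebra.
Set Implicit Arguments. Unset Strict Implicit. Unset Printing Implicit Defensive.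
Import GRing.Theory.
Local Open Scope ring_scope.

Fixpoint bin_lsb_aux (fuel n : nat) : seq bool :=
  match fuel with
  | 0%N => [::]
  | fuel'.+1 => if n == 0%N then [::] else odd n :: bin_lsb_aux fuel' n./2
  end.

Definition bin (n : nat) : seq bool := rev (bin_lsb_aux n n).

(* number of (possibly overlapping) occurrences of w as a factor of s *)
Definition occ (w s : seq bool) : nat :=
  count (fun i => take (size w) (drop i s) == w) (iota 0 (size s - size w).+1).

Definition a_w (w : seq bool) (n : nat) : nat := occ w (bin n).

Definition rs (n : nat) : int := (-1) ^+ a_w [:: true; true] n.

Definition rs_factor (i len : nat) : seq int := [seq rs (i + k) | k <- iota 0 len].

Definition bordered {T : eqType} (w : seq T) : Prop :=
  exists x : seq T, (0 < size x)%N /\ (size x <= (size w)./2)%N /\ prefix x w /\ suffix x w.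

Definition unbordered {T : eqType} (w : seq T) : Prop := ~ bordered w.

Lemma bin_test : [:: bin 0; bin 1; bin 6; bin 11] = [:: [::]; [:: true]; [:: true; true; false]; [:: true; false; true; true]].
Proof. by []. Qed.
Lemma rs_test : [seq rs k | k <- iota 0 8] = [:: 1; 1; 1; -1; 1; 1; -1; 1]%R.
Proof. by []. Qed.

From mathcomp Require Import all_boot all_algebra.
From mathcomp Require Import zify.
Import GRing.Theory.

Set Implicit Arguments. Unset Strict Implicit. Unset Printing Implicit Defensive.

(* With r(n) = (-1)^(rsbit n), one has rsbit (4j + k) = rsbit j (+) f(k, odd j), so every
   factor of length m at position i blows up to factors of length 4m - d (d < 4) at the
   positions 4i + a - 3.  Nine consecutive letters determine their phase modulo 4 and the
   parity of their 4-block, so a border of length at least 9 of a blown-up factor is the image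
   of a border of the original one.  Borders of length at most 8 only involve a bounded
   context around both ends of the factor, recorded as a 12-bit state; a finite computation
   shows that the states for which every d admits an offset a excluding such short borders
   are closed under blowing up.  Induction on the length, from the lengths at most 12,
   concludes. *)

Section Borders.
Variables (T : eqType) (x0 : T).

Lemma borderedP (w : seq T) : bordered w <->
  exists2 l, 0 < l <= (size w)./2 &
    forall k, k < l -> nth x0 w k = nth x0 w (size w - l + k).
Proof.
split=> [[x [x_gt0 [x_le]]] | [l /andP [l_gt0 l_le] per]].
  rewrite prefixE suffixE => -[/eqP take_w /eqP drop_w].
  exists (size x) => [|k k_lt]; first by rewrite x_gt0.
  by rewrite -(nth_take _ k_lt) take_w -{1}drop_w nth_drop.
have l_le_w : l <= size w by lia.
exists (take l w); rewrite size_take_min (minn_idPl l_le_w); split=> //; split=> //.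
split; first by rewrite prefixE size_take_min (minn_idPl l_le_w).
rewrite suffixE size_take_min (minn_idPl l_le_w).
apply/eqP/(@eq_from_nth _ x0) => [|k].
  by rewrite size_drop size_take_min (minn_idPl l_le_w); lia.
rewrite size_drop => k_lt; have k_lt_l : k < l by lia.
by rewrite nth_drop nth_take // (per _ k_lt_l).
Qed.

Definition borderless (w : seq T) : bool :=
  all (fun l => take l w != drop (size w - l) w) (iota 1 (size w)./2).

Lemma borderless_unbordered w : borderless w -> unbordered w.
Proof.
move=> /allP no_border [x [x_gt0 [x_le]]]; rewrite prefixE suffixE => -[/eqP pre /eqP suf].
have x_in : size x \in iota 1 (size w)./2 by rewrite mem_iota; lia.
by move: (no_border _ x_in); rewrite pre suf eqxx.
Qed.

End Borders.

Lemma bin_lsb_aux_fuel f1 f2 n : n <= f1 -> n <= f2 -> bin_lsb_aux f1 n = bin_lsb_aux f2 n.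
Proof.
elim: f1 f2 n => [|f1 IH] [|f2] n le1 le2 //=; try by have -> : n = 0 by lia.
by case: eqP => // _; congr (_ :: _); apply: IH; lia.
Qed.

Lemma bin_lsb_auxS n : 0 < n -> bin_lsb_aux n n = odd n :: bin_lsb_aux n./2 n./2.
Proof. by case: n => [//|n] _ /=; congr (_ :: _); apply: bin_lsb_aux_fuel; lia. Qed.

Lemma bin_snoc n (b : bool) : 0 < n -> bin (b + n.*2) = rcons (bin n) b.
Proof.
move=> n_gt0; rewrite /bin bin_lsb_auxS; last by lia.
by rewrite oddD odd_double addbF half_bit_double rev_cons; case: b.
Qed.
Local Notation occ11 := (occ [:: true; true]).

Lemma occ11_cons x y s : occ11 [:: x, y & s] = (x && y) + occ11 (y :: s).
Proof.
rewrite /occ /= take0; congr (_ + _); first by case: x; case: y.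
case: s => [|z s] /=; first by case: y.
rewrite !subSS subn0 /= [iota 2 _](iotaDl 1 1) !count_map.
by congr (_ + _); apply: eq_count => k /=; rewrite -addnS.
Qed.

Lemma occ11_rcons s b : occ11 (rcons s b) = occ11 s + (last false s && b).
Proof.
elim: s => [|x [|y s] IH] /=; first by case: b.
  by rewrite occ11_cons; case: x; case: (b).
by rewrite occ11_cons IH occ11_cons addnA.
Qed.

Definition rsbit n := odd (a_w [:: true; true] n).

Lemma rsE n : rs n = ((-1) ^+ rsbit n)%R.
Proof. by rewrite /rs /rsbit signr_odd. Qed.

Lemma eq_rs x y : rs x = rs y <-> rsbit x = rsbit y.
Proof. by rewrite !rsE; split=> [|-> //]; case: (rsbit x); case: (rsbit y). Qed.

Lemma size_rs_factor i n : size (rs_factor i n) = n.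
Proof. by rewrite size_map size_iota. Qed.

Lemma nth_rs_factor i n k : k < n -> nth 0%R (rs_factor i n) k = rs (i + k).
Proof. by move=> k_lt; rewrite (nth_map 0) ?size_iota // nth_iota. Qed.

Lemma bordered_rs_factor i n : bordered (rs_factor i n) <->
  exists2 l, 0 < l <= n./2 & forall k, k < l -> rsbit (i + k) = rsbit (i + (n - l) + k).
Proof.
rewrite (borderedP 0%R) size_rs_factor.
split=> -[l l_le per]; exists l => // k k_lt.
all: have [k_lt_n shift_lt_n] : k < n /\ n - l + k < n by lia.
  by apply/eq_rs; move: (per k k_lt); rewrite !nth_rs_factor // addnA.
by rewrite !nth_rs_factor // addnA; apply/eq_rs/per.
Qed.

Lemma rsbit_double n (b : bool) : rsbit (b + n.*2) = rsbit n (+) (odd n && b).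
Proof.
case: n => [|n]; first by case: b.
rewrite /rsbit /a_w bin_snoc // occ11_rcons /bin bin_lsb_auxS // rev_cons last_rcons.
by rewrite oddD; case: (odd _ && b).
Qed.

Definition block_flip (k : nat) (p : bool) : bool :=
  match k with 0 | 1 => false | 2 => p | _ => ~~ p end.

Lemma rsbit_block j k : k < 4 -> rsbit (4 * j + k) = rsbit j (+) block_flip k (odd j).
Proof.
move=> k_lt4; have -> : 4 * j + k = odd k + ((1 < k) + j.*2).*2.
  by case: k k_lt4 => [|[|[|[|]]]] //= _; rewrite -!muln2; lia.
rewrite !rsbit_double oddD odd_double addbF.
by case: k k_lt4 => [|[|[|[|]]]] //= _; rewrite ?andbF ?andbT ?addbF //;
  case: (rsbit j); case: (odd j).
Qed.

Lemma rsbit_block_shift j q r : ~~ odd q -> r < 4 ->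
  rsbit (4 * j + r) = rsbit (4 * (j + q) + r) -> rsbit j = rsbit (j + q).
Proof. by move=> q_even r_lt4; rewrite !rsbit_block // oddD (negbTE q_even) addbF => /addIb. Qed.

(* Letter t of the image of v under the 4-block substitution, the first letter of v sitting
   at a position of parity p. *)
Definition expansion (v : seq bool) (p : bool) (t : nat) : bool :=
  nth false v (t %/ 4) (+) block_flip (t %% 4) (p (+) odd (t %/ 4)).

Lemma rsbit_expansion B n t :
  t < 4 * n -> rsbit (4 * B + t) = expansion (mkseq (fun o => rsbit (B + o)) n) (odd B) t.
Proof.
move=> t_lt; have t_div_lt : t %/ 4 < n by rewrite ltn_divLR //; lia.
have -> : 4 * B + t = 4 * (B + t %/ 4) + t %% 4 by rewrite {1}(divn_eq t 4); lia.
rewrite rsbit_block ?ltn_mod //.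
by rewrite /expansion nth_mkseq // oddD.
Qed.

Fixpoint words (n : nat) : seq (seq bool) :=
  if n is n'.+1 then [seq b :: w | b <- [:: false; true], w <- words n'] else [:: [::]].

Lemma mem_words n w : size w = n -> w \in words n.
Proof.
elim: n w => [|n IH] [|b w] // [/IH w_in].
by apply: allpairs_f => //; case: b.
Qed.

Definition phase_determined : bool :=
  all (fun t0 => all (fun t1 => all (fun p0 => all (fun p1 => all (fun v => all (fun w =>
    all (fun k => expansion v p0 (t0 + k) == expansion w p1 (t1 + k)) (iota 0 9) ==>
    (t0 == t1) && (p0 == p1)) (words 3)) (words 3)) [:: false; true]) [:: false; true])
    (iota 0 4)) (iota 0 4).

Lemma phase_determinedP : phase_determined.
Proof. by vm_compute. Qed.

Lemma window9_phase t t' : (forall k, k < 9 -> rsbit (t + k) = rsbit (t' + k)) ->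
  t %% 4 = t' %% 4 /\ odd (t %/ 4) = odd (t' %/ 4).
Proof.
move=> same_window.
have mem_bool (b : bool) : b \in [:: false; true] by case: b.
have word_in x : mkseq (fun o => rsbit (x %/ 4 + o)) 3 \in words 3 by rewrite mem_words ?size_mkseq.
have t_lt4 x : x %% 4 \in iota 0 4 by rewrite mem_iota ltn_mod.
move: phase_determinedP => /allP/(_ _ (t_lt4 t)) /allP/(_ _ (t_lt4 t')).
move=> /allP/(_ _ (mem_bool (odd (t %/ 4)))) /allP/(_ _ (mem_bool (odd (t' %/ 4)))).
move=> /allP/(_ _ (word_in t)) /allP/(_ _ (word_in t')) /implyP det.
suff /andP [/eqP -> /eqP ->] : (t %% 4 == t' %% 4) && (odd (t %/ 4) == odd (t' %/ 4)) by [].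
apply: det; apply/allP => k; rewrite mem_iota => /andP [_ k_lt9].
have splitE x : x + k = 4 * (x %/ 4) + (x %% 4 + k) by rewrite addnA mulnC -divn_eq.
rewrite -!rsbit_expansion -?splitE ?same_window //.
- by have := ltn_mod t' 4; lia.
- by have := ltn_mod t 4; lia.
Qed.

(* The window forces p = 4q with q even, and then the block flips on both sides agree. *)
Lemma rsbit_desubstitute s l p : 8 < l ->
  (forall k, k < l -> rsbit (s + k) = rsbit (s + p + k)) ->
  exists2 q, p = 4 * q & forall j, s <= 4 * j + 3 -> 4 * j < s + l -> rsbit j = rsbit (j + q).
Proof.
move=> l_gt8 per.
have [mod_eq odd_eq] := window9_phase (fun k k_lt => per k (leq_trans k_lt l_gt8)).
have p_eq : p = 4 * (p %/ 4) by lia.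
exists (p %/ 4) => // j j_lo j_hi.
have q_even : ~~ odd (p %/ 4).
  have div_sum : (s + p) %/ 4 = s %/ 4 + p %/ 4 by lia.
  by move: odd_eq; rewrite div_sum oddD; case: odd; case: odd.
set y := maxn (4 * j) s.
have [y_lo y_hi] : 4 * j <= y < 4 * j + 4 /\ s <= y < s + l by rewrite /y; lia.
apply: (@rsbit_block_shift _ _ (y - 4 * j)) => //; first by lia.
have -> : 4 * j + (y - 4 * j) = s + (y - s) by lia.
have -> : 4 * (j + p %/ 4) + (y - 4 * j) = s + p + (y - s) by lia.
by apply: per; lia.
Qed.

(* Enough context around both ends of the factor of length m at i to compute the states of
   its blow-ups and to test their short borders. *)
Definition state (i m : nat) : seq bool :=
  odd i :: mkseq (fun k => rsbit (i - 2 + k)) 5 ++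
  odd (i + m) :: mkseq (fun k => rsbit (i + m - 3 + k)) 5.

Lemma size_state i m : size (state i m) = 12.
Proof. by []. Qed.

Definition head_bit (s : seq bool) (t : nat) : bool :=
  expansion (take 5 (drop 1 s)) (nth false s 0) t.

(* Only the parity of i + m is stored, while the block parity here is that of i + m - 3. *)
Definition tail_bit (s : seq bool) (t : nat) : bool :=
  expansion (drop 7 s) (~~ nth false s 6) t.

Lemma head_bitE i m t : 2 <= i -> t < 20 -> head_bit (state i m) t = rsbit (4 * (i - 2) + t).
Proof.
move=> i_ge2 t_lt; rewrite (@rsbit_expansion (i - 2) 5) //.
suff -> : odd (i - 2) = odd i by [].
by rewrite -[in RHS](subnK i_ge2) oddD addbF.
Qed.

Lemma tail_bitE i m t :
  3 <= i + m -> t < 20 -> tail_bit (state i m) t = rsbit (4 * (i + m - 3) + t).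
Proof.
move=> im_ge3 t_lt; rewrite (@rsbit_expansion (i + m - 3) 5) //.
suff -> : odd (i + m - 3) = ~~ odd (i + m) by [].
by rewrite -[in odd (i + m)](subnK im_ge3) oddD addbT negbK.
Qed.

Definition state_step (s : seq bool) (a c : nat) : seq bool :=
  ~~ odd a :: mkseq (fun k => head_bit s (3 + a + k)) 5 ++
  ~~ odd c :: mkseq (fun k => tail_bit s (6 + c + k)) 5.

Lemma state_stepE i m a c : 2 <= i -> 0 < m -> a < 7 -> c < 7 -> a <= 4 * m + c ->
  state (4 * i + a - 3) (4 * m + c - a) = state_step (state i m) a c.
Proof.
move=> i_ge2 m_gt0 a_lt7 c_lt7 a_le.
have startE : 4 * i + a - 3 = 4 * (i - 1) + a.+1 by lia.
have endE : 4 * i + a - 3 + (4 * m + c - a) = 4 * (i + m - 1) + c.+1 by lia.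
have odd4 x y : odd (4 * x + y) = odd y by rewrite oddD oddM.
rewrite /state /state_step endE startE !odd4 !oddS -/(state i m).
congr (_ :: _ ++ _ :: _); apply/eq_in_map => k; rewrite mem_iota => /andP [_ k_lt5].
  by rewrite head_bitE; [congr rsbit | |]; lia.
by rewrite tail_bitE; [congr rsbit | |]; lia.
Qed.

(* The blown-up factor starts at letter [5 + a] of the head expansion of s and ends at letter
   [8 + c] of its tail expansion; this checks that it has no border of length 1..8. *)
Definition no_short_border (s : seq bool) (a c : nat) : bool :=
  all (fun l => has (fun k => head_bit s (5 + a + k) != tail_bit s (9 + c - l + k)) (iota 0 l))
    (iota 1 8).

Definition admissible (s : seq bool) (d a : nat) : bool := (d <= a) && no_short_border s a (a - d).

Definition extendable (s : seq bool) : bool :=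
  all (fun d => has (admissible s d) (iota 0 7)) (iota 0 4).

Inductive bool_trie := Leaf of bool | Node of bool_trie & bool_trie.

Fixpoint tabulate (n : nat) (P : seq bool -> bool) : bool_trie :=
  if n is n'.+1 then
    Node (tabulate n' (fun w => P (false :: w))) (tabulate n' (fun w => P (true :: w)))
  else Leaf (P [::]).

Fixpoint lookup (t : bool_trie) (w : seq bool) : bool :=
  match t, w with
  | Leaf b, _ => b
  | Node l r, x :: w' => lookup (if x then r else l) w'
  | Node _ _, [::] => false
  end.

Lemma lookup_tabulate n P w : size w = n -> lookup (tabulate n P) w = P w.
Proof. by elim: n P w => [|n IH] P [|[] w] //= [/IH ->]. Qed.

(* [tabulate] memoizes [extendable] for the closure check. *)
Definition extendable_closed : bool :=
  let table := tabulate 12 extendable in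
  all (fun s => lookup table s ==> all (fun d => has (fun a =>
      admissible s d a && lookup table (state_step s a (a - d))) (iota 0 7)) (iota 0 4))
    (words 12).

Lemma extendable_closedP : extendable_closed.
Proof. by vm_compute. Qed.

Lemma extendable_step s d : size s = 12 -> extendable s -> d < 4 ->
  exists2 a, a < 7 & admissible s d a && extendable (state_step s a (a - d)).
Proof.
move=> s_size s_ext d_lt4.
have s_in : s \in words 12 by rewrite mem_words.
move: extendable_closedP => /allP/(_ _ s_in); rewrite lookup_tabulate // s_ext.
move=> /allP/(_ d); rewrite mem_iota => /(_ d_lt4) /hasP [a]; rewrite mem_iota => /andP [_ a_lt7].
by rewrite lookup_tabulate; [exists a | ].
Qed.

Lemma unbordered_blowup i m a d : 2 <= i -> 0 < m -> d < 4 -> a < 7 ->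
  admissible (state i m) d a -> unbordered (rs_factor i m) ->
  unbordered (rs_factor (4 * i + a - 3) (4 * m - d)).
Proof.
move=> i_ge2 m_gt0 d_lt4 a_lt7 /andP [d_le_a no_short] unb.
move=> /bordered_rs_factor [l /andP [l_gt0 l_le] per].
have [l_le8 | l_gt8] := leqP l 8.
  move: no_short => /allP/(_ l); rewrite mem_iota => /(_ _)/hasP [|k]; first by lia.
  rewrite mem_iota => /andP [_ k_lt]; rewrite head_bitE ?tail_bitE; try lia.
  have -> : 4 * (i - 2) + (5 + a + k) = 4 * i + a - 3 + k by lia.
  have -> : 4 * (i + m - 3) + (9 + (a - d) - l + k) = 4 * i + a - 3 + (4 * m - d - l) + k by lia.
  by rewrite per ?eqxx.
have [q p_eq shift] := rsbit_desubstitute l_gt8 per.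
apply: unb; apply/bordered_rs_factor; exists (m - q) => [|k k_lt]; first by lia.
rewrite shift; [congr rsbit | |]; lia.
Qed.

Definition base_cases : bool :=
  all (fun n => has (fun i => borderless (rs_factor i n) && extendable (state i n)) (iota 2 6))
    (iota 4 9).

Lemma base_casesP : base_cases.
Proof. by vm_compute. Qed.

Lemma unbordered_extendable_factor n : 4 <= n ->
  exists i, [/\ 2 <= i, unbordered (rs_factor i n) & extendable (state i n)].
Proof.
elim/ltn_ind: n => n IH n_ge4.
have [n_small | n_large] := leqP n 12.
  move: base_casesP => /allP/(_ n); rewrite mem_iota => /(_ _)/hasP [|i]; first by lia.
  rewrite mem_iota => /andP [i_ge2 _] /andP [/borderless_unbordered unb ext].
  by exists i.
pose m := (n + 3) %/ 4; pose d := 4 * m - n.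
have [i [i_ge2 unb ext]] := IH m ltac:(lia) ltac:(lia).
have d_lt4 : d < 4 by lia.
have [a a_lt7 /andP [adm ext']] := extendable_step (size_state i m) ext d_lt4.
have d_le_a : d <= a by case/andP: adm.
exists (4 * i + a - 3); split; first by lia.
  have -> : n = 4 * m - d by lia.
  by apply: unbordered_blowup => //; lia.
by rewrite (_ : n = 4 * m + (a - d) - a) ?state_stepE //; lia.
Qed.

Definition short_lengths : bool :=
  all (fun n => has (fun i => borderless (rs_factor i n)) (iota 0 3)) (iota 0 4).

Lemma short_lengthsP : short_lengths.
Proof. by vm_compute. Qed.

Theorem theorem5 : forall n : nat, exists i : nat, unbordered (rs_factor i n).
Proof.
move=> n; have [n_lt4 | n_ge4] := ltnP n 4.
  move: short_lengthsP => /allP/(_ n); rewrite mem_iota => /(_ n_lt4)/hasP [i _].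
  by move=> /borderless_unbordered; exists i.
by have [i [_ unb _]] := unbordered_extendable_factor n_ge4; exists i.
Qed.
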